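(* Let $\mathcal A$ be a $K$-armed bandit algorithm which at each round $t$ draws $A_t$ according to a probability vector $x_t=x_t(\mathcal A)$ determined by the past, i.e. $\mathbb P(A_t=a\mid\mathcal F_{t-1})=x_{t,a}$, and let $\overline x_T=\frac1T\sum_{t=1}^Tx_t$. Suppose there exists $\varepsilon=\varepsilon_T>0$ with $T\varepsilon\to\infty$ and $\min_{a\in[K]}\overline x_{T,a}\ge\varepsilon$. Suppose additionally that there exists a deterministic probability vector $x^\star_T$ with all coordinates positive such that $\overline x_{T,a}/x^\star_{T,a}\to1$ in probability for every arm $a\in[K]$. Then $\mathcal A$ is stable.
   Context: $\mathcal F_{t-1}$ is the sigma-field generated by the history up to round $t-1$. $n_{a,T}=\sum_{t=1}^T\mathbb I\{A_t=a\}$. An algorithm is stable if for every arm $a$ there exist non-random scalars $n^\star_{a,T}$ (possibly depending on the problem parameters and $T$) such that $n_{a,T}/n^\star_{a,T}\to1$ in probability and $n^\star_{a,T}\to\infty$ as $T\to\infty$. *)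

From HB Require Import structures.
From mathcomp Require Import all_boot all_order all_algebra.
From mathcomp Require Import all_classical all_reals all_analysis.
Set Implicit Arguments. Unset Strict Implicit. Unset Printing Implicit Defensive.
Import Order.TTheory GRing.Theory Num.Theory.
Import numFieldNormedType.Exports.
Local Open Scope classical_set_scope.
Local Open Scope ring_scope.

Section bandit_defs.
Context {R : realType} {d : measure_display} {Omega : measurableType d}.

Definition prob_vec (K : nat) (v : 'I_K -> R) : Prop :=
  (forall a, 0 <= v a) /\ \sum_(a < K) v a = 1.

Definition filtration (F : nat -> set (set Omega)) : Prop :=
  (forall t, sigma_algebra setT (F t)) /\
  (forall t, F t `<=` measurable) /\
  (forall t, F t `<=` F t.+1).

(* The bandit algorithm: rounds t = 1, 2, ...; A t is the arm drawn at round t,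
   x t is the (random) probability vector used at round t.
   - A t is F t-measurable (adapted to the history),
   - x t is a probability vector determined by the past (F (t-1)-measurable),
   - P(A_t = a | F_{t-1}) = x_{t,a}, i.e. for every B in F_{t-1},
       P(B /\ {A_t = a}) = E[1_B x_{t,a}]. *)
Definition draws_according (P : probability Omega R) (K : nat)
  (F : nat -> set (set Omega)) (A : nat -> Omega -> 'I_K)
  (x : nat -> Omega -> 'I_K -> R) : Prop :=
  filtration F /\
  (forall t a, F t [set w | A t w = a]) /\
  (forall t w, prob_vec (x t w)) /\
  (forall t a (B : set R), (0 < t)%N -> measurable B ->
      F t.-1 [set w | B (x t w a)]) /\
  (forall t a (B : set Omega), (0 < t)%N -> F t.-1 B ->
      P (B `&` [set w | A t w = a]) = (\int[P]_(w in B) (x t w a)%:E)%E).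

Definition npulls (K : nat) (A : nat -> Omega -> 'I_K) (a : 'I_K) (T : nat)
  (w : Omega) : R :=
  \sum_(1 <= t < T.+1) ((A t w == a)%:R : R).

Definition xbar (K : nat) (x : nat -> Omega -> 'I_K -> R) (T : nat)
  (w : Omega) (a : 'I_K) : R :=
  T%:R^-1 * \sum_(1 <= t < T.+1) x t w a.

Definition cvg_in_prob (P : probability Omega R) (X : nat -> Omega -> R)
  (c : R) : Prop :=
  forall e : R, 0 < e ->
    (fun T => P [set w | e <= `|X T w - c|]) @ \oo --> 0%E.

Definition stable (P : probability Omega R) (K : nat)
  (A : nat -> Omega -> 'I_K) : Prop :=
  forall a : 'I_K, exists nstar : nat -> R,
    cvg_in_prob P (fun T w => npulls A a T w / nstar T) 1 /\
    nstar @ \oo --> +oo.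

End bandit_defs.

From HB Require Import structures.
From mathcomp Require Import all_boot all_order all_algebra.
From mathcomp Require Import all_classical all_reals all_analysis.
From mathcomp Require Import finmap measurable_realfun ring lra.
Set Implicit Arguments. Unset Strict Implicit. Unset Printing Implicit Defensive.
Import Order.TTheory GRing.Theory Num.Theory.
Import numFieldNormedType.Exports.
Local Open Scope classical_set_scope.
Local Open Scope ring_scope.

(* Write S_T = sum_(t <= T) x_(t,a) and M_T = n_(a,T) - S_T.  The increments
   1{A_t = a} - x_(t,a) of M have conditional mean 0 given F_(t-1) and
   conditional variance x_(t,a) (1 - x_(t,a)), so M^2 - V is a martingale for
   V_T = sum_(t <= T) x_(t,a) (1 - x_(t,a)) <= S_T.  Freezing the increments
   once S_t exceeds a deterministic cap C keeps V below C, hence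
   E[M_T^2] <= C and Chebyshev bounds the deviations of the frozen martingale.
   With N_T = T x*_(T,a) and C = (1 + e/2) N_T: whenever S_T / N_T = xbar / x*
   is within e/2 of 1 the cap is not reached, and n_(a,T) / N_T deviates from
   1 by at most e/2 + |M_T| / N_T, so P(|n_(a,T) / N_T - 1| >= e) is at most
   P(|xbar / x* - 1| >= e/2) + O(1 / N_T).  Finally N_T -> +oo: for large T
   some outcome has xbar < 2 x*, whence eps_T <= 2 x*_(T,a) and
   N_T >= T eps_T / 2. *)

Section bounded_measurable.
Context {d} {T : measurableType d} {R : realType}.
Implicit Types f g : T -> R.

Definition bounded_measurable f :=
  measurable_fun setT f /\ exists M, forall t, `|f t| <= M.

Lemma bounded_measurable_cst (c : R) : bounded_measurable (fun=> c).
Proof. by split; [exact: measurable_cst | exists `|c|]. Qed.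

Lemma bounded_measurable_indic (A : set T) :
  measurable A -> bounded_measurable (\1_A).
Proof.
move=> mA; split; first exact: measurable_indic.
by exists 1 => t; rewrite indicE; case: (t \in A); rewrite ?normr1 ?normr0.
Qed.

Lemma bounded_measurableD f g : bounded_measurable f -> bounded_measurable g ->
  bounded_measurable (fun t => f t + g t).
Proof.
move=> [mf [M fM]] [mg [N gN]]; split; first exact: measurable_funD.
by exists (M + N) => t; rewrite (le_trans (ler_normD _ _)) ?lerD.
Qed.

Lemma bounded_measurableB f g : bounded_measurable f -> bounded_measurable g ->
  bounded_measurable (fun t => f t - g t).
Proof.
move=> [mf [M fM]] [mg [N gN]]; split; first exact: measurable_funB.
by exists (M + N) => t; rewrite (le_trans (ler_normB _ _)) ?lerD.
Qed.

Lemma bounded_measurableM f g : bounded_measurable f -> bounded_measurable g ->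
  bounded_measurable (fun t => f t * g t).
Proof.
move=> [mf [M fM]] [mg [N gN]]; split; first exact: measurable_funM.
by exists (M * N) => t; rewrite normrM ler_pM.
Qed.

Lemma bounded_measurable_sum (I : eqType) (r : seq I) (Q : pred I)
    (f : I -> T -> R) :
    (forall i, i \in r -> Q i -> bounded_measurable (f i)) ->
  bounded_measurable (fun t => \sum_(i <- r | Q i) f i t).
Proof.
elim: r => [_|i r IHr bf].
  by under eq_fun do rewrite big_nil; exact: bounded_measurable_cst.
under eq_fun do rewrite big_cons.
have bfr j : j \in r -> Q j -> bounded_measurable (f j).
  by move=> jr; apply: bf; rewrite inE jr orbT.
have [Qi|_] := boolP (Q i); last exact: IHr.
by apply: bounded_measurableD (IHr bfr); apply: bf; rewrite ?mem_head.
Qed.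

Lemma bounded_measurable_integrable (mu : {finite_measure set T -> \bar R}) f :
  bounded_measurable f -> mu.-integrable setT (EFin \o f).
Proof.
move=> [mf [M fM]]; apply: measurable_bounded_integrable => //.
  by rewrite -ge0_fin_numE ?fin_num_measure.
exists M; split; first exact: num_real.
by move=> M' MM' t _; exact: le_trans (fM t) (ltW MM').
Qed.

End bounded_measurable.

Lemma measurable_le_normr d (T : measurableType d) (R : realType) (f : T -> R)
    (e : R) :
  measurable_fun setT f -> measurable [set t | e <= `|f t|].
Proof.
move=> mf; rewrite -[X in measurable X]setTI.
by apply: measurable_fun_le => //; exact: measurableT_comp.
Qed.

Lemma bounded_chebyshev d (T : measurableType d) (R : realType)
    (P : probability T R) (f : T -> R) (e : R) :
  bounded_measurable f -> 0 < e ->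
  (P [set t | e <= `|f t|]%R <= ((\int[P]_t (f t ^+ 2)) / e ^+ 2)%R%:E)%E.
Proof.
move=> bf e0; have [mf _] := bf.
have mE := measurable_le_normr e mf.
have bE := bounded_measurable_indic mE.
rewrite -(fineK (@fin_num_measure _ _ _ P _ mE)) lee_fin.
rewrite ler_pdivlMr ?exprn_gt0 //.
have -> : fine (P [set t | e <= `|f t|]) = \int[P]_t \1_[set t | e <= `|f t|] t.
  by rewrite /Rintegral integral_indic ?setIT.
rewrite -RintegralZr ?bounded_measurable_integrable //.
apply: le_Rintegral => //.
- apply/bounded_measurable_integrable/bounded_measurableM => //.
  exact: bounded_measurable_cst.
- apply: bounded_measurable_integrable.
  by under eq_fun do rewrite expr2; exact: bounded_measurableM.
move=> t _; rewrite indicE; case: (boolP (t \in _)) => [/set_mem /= fe|_].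
  rewrite mul1r -[f t ^+ 2]real_normK ?num_real // !expr2.
  by apply: ler_pM; rewrite // ltW.
by rewrite mul0r sqr_ge0.
Qed.

Lemma monotone_convergence_mul d (T : measurableType d) (R : realType)
    (mu : {measure set T -> \bar R}) (h : nat -> T -> R) (Y g : T -> R) :
  (forall n, measurable_fun setT (h n)) -> (forall n t, 0 <= h n t) ->
  (forall t, {homo h ^~ t : m n / (m <= n)%N >-> m <= n}) ->
  (forall t, h ^~ t @ \oo --> Y t) ->
  measurable_fun setT g -> (forall t, 0 <= g t) ->
  (\int[mu]_t (Y t * g t)%:E =
   limn (fun n => \int[mu]_t (h n t * g t)%:E))%E.
Proof.
move=> mh h0 ndh hY mg g0; rewrite -monotone_convergence //.
- apply: eq_integral => t _; apply/esym/cvg_lim => //.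
  by apply: cvg_EFin; [exact: nearW | exact: cvgM (hY t) (cvg_cst _)].
- by move=> n; apply/measurable_EFinP; exact: measurable_funM.
- by move=> n t _; rewrite lee_fin mulr_ge0.
- by move=> t _ m n mn; rewrite lee_fin ler_wpM2r // ndh.
Qed.

Section conditional_indicator.
Context {d} {T : measurableType d} {R : realType} (P : probability T R).
Variables (G : set (set T)) (S : set T) (z : T -> R).
Hypotheses (G_sigma : sigma_algebra setT G) (G_meas : G `<=` measurable).
Hypotheses (mS : measurable S) (mz : measurable_fun setT z).
Hypothesis z_ge0 : forall t, 0 <= z t.
Hypothesis condS : forall B, G B -> P (B `&` S) = (\int[P]_(t in B) (z t)%:E)%E.
Local Notation GT := (g_sigma_algebraType G).
Import HBNNSimple.

Let measurable_GT (B : set GT) : measurable B = G B.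
Proof. by rewrite (measurable_g_measurableTypeE G_sigma). Qed.

Lemma measurable_fun_sub_sigma (f : T -> R) :
  measurable_fun (setT : set GT) f -> measurable_fun setT f.
Proof.
by move=> mf _ B mB; apply: G_meas; rewrite -measurable_GT; exact: mf.
Qed.

Lemma integral_indic_mul_cond (B : set T) : G B ->
  (\int[P]_t (\1_B t * \1_S t)%:E = \int[P]_t (\1_B t * z t)%:E)%E.
Proof.
move=> GB; have mB := G_meas GB.
transitivity (\int[P]_t (\1_(B `&` S) t)%:E)%E.
  by apply: eq_integral => t _; rewrite indicI.
rewrite integral_indic ?setIT //; last exact: measurableI.
apply: (eq_trans (condS GB)); rewrite integral_mkcond.
apply: eq_integral => t _.
by rewrite /patch indicE; case: ifPn => _; rewrite ?mul1r ?mul0r.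
Qed.

Lemma ge0_integral_nnsfun_mul (h : {nnsfun GT >-> R}) (u : T -> R) :
    measurable_fun setT u -> (forall t, 0 <= u t) ->
  let s := fset_set (range h) in
  (\int[P]_t ((h : GT -> R) t * u t)%:E = \sum_(i < #|`s|)
     (s`_i)%:E * \int[P]_t (\1_((h : GT -> R) @^-1` [set s`_i]) t * u t)%:E)%E.
Proof.
move=> mu u0 s; have hE := fimfunEord h.
have s_ge0 (i : 'I_#|`s|) : 0 <= s`_i.
  have : s`_i \in s by apply: mem_nth.
  rewrite in_fset_set; last exact: fimfunP.
  by move=> /set_mem [t _ <-]; exact: fun_ge0.
have m1 (i : 'I_#|`s|) :
    measurable_fun setT (\1_((h : GT -> R) @^-1` [set s`_i]) : T -> R).
  apply/measurable_indic/G_meas; rewrite -measurable_GT.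
  exact: measurable_funPTI.
under eq_integral do rewrite hE mulr_suml -sumEFin.
rewrite ge0_integral_sum //; last first.
- by move=> i t _; rewrite lee_fin -mulrA !mulr_ge0.
- by move=> i; apply/measurable_EFinP; do 2 apply: measurable_funM => //.
apply: eq_bigr => i _; rewrite -ge0_integralZl ?lee_fin //.
- by apply: eq_integral => t _; rewrite -EFinM mulrA.
- by apply/measurable_EFinP; exact: measurable_funM.
- by move=> t _; rewrite lee_fin mulr_ge0.
Qed.

Lemma integral_nnsfun_mul_cond (h : {nnsfun GT >-> R}) :
  (\int[P]_t ((h : GT -> R) t * \1_S t)%:E =
   \int[P]_t ((h : GT -> R) t * z t)%:E)%E.
Proof.
rewrite !ge0_integral_nnsfun_mul //.
apply: eq_bigr => i _; rewrite integral_indic_mul_cond // -measurable_GT.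
exact: measurable_funPTI.
Qed.

Lemma ge0_integral_mul_cond (Y : T -> R) :
    measurable_fun (setT : set GT) Y -> (forall t, 0 <= Y t) ->
  (\int[P]_t (Y t * \1_S t)%:E = \int[P]_t (Y t * z t)%:E)%E.
Proof.
move=> mY Y0; have mYE : measurable_fun (setT : set GT) (EFin \o Y).
  exact/measurable_EFinP.
pose h n : T -> R := (nnsfun_approx (@measurableT _ GT) mYE n : GT -> R).
have mh n : measurable_fun setT (h n).
  by apply: measurable_fun_sub_sigma; exact: measurable_funPT.
have h0 n t : 0 <= h n t by exact: fun_ge0.
have ndh t : {homo h ^~ t : m n / (m <= n)%N >-> m <= n}.
  by move=> m n /(nd_nnsfun_approx (@measurableT _ GT) mYE)/lefP; apply.
have hY t : h ^~ t @ \oo --> Y t.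
  have Y0E (t' : GT) : setT t' -> (0 <= (EFin \o Y) t')%E by rewrite lee_fin.
  exact: fine_cvg (cvg_nnsfun_approx (@measurableT _ GT) mYE Y0E (I : setT t)).
rewrite (monotone_convergence_mul _ mh h0 ndh hY (measurable_indic mS)) //.
rewrite (monotone_convergence_mul _ mh h0 ndh hY mz) //.
by congr (lim (_ @ \oo)); apply/funext => n; exact: integral_nnsfun_mul_cond.
Qed.

Lemma Rintegral_mul_cond (Y : T -> R) :
    measurable_fun (setT : set GT) Y -> (exists M, forall t, `|Y t| <= M) ->
    (forall t, z t <= 1) ->
  \int[P]_t (Y t * \1_S t) = \int[P]_t (Y t * z t).
Proof.
move=> mY [M YM] z_le1.
have M_ge0 : 0 <= M := le_trans (normr_ge0 _) (YM point).
have bY : bounded_measurable Y.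
  by split; [exact: measurable_fun_sub_sigma | exists M].
have bz : bounded_measurable z by split => //; exists 1 => t; rewrite ger0_norm.
have YM_ge0 t : 0 <= Y t + M by have := YM t; rewrite ler_norml; lra.
have intM f :
    bounded_measurable f -> P.-integrable setT (EFin \o (fun t => M * f t)).
  by move=> bf; apply/bounded_measurable_integrable/bounded_measurableM => //;
    exact: bounded_measurable_cst.
have splitM f : bounded_measurable f ->
    \int[P]_t ((Y t + M) * f t) = \int[P]_t (Y t * f t) + \int[P]_t (M * f t).
  move=> bf; rewrite -RintegralD ?intM ?bounded_measurable_integrable //;
    last exact: bounded_measurableM.
  by apply: eq_Rintegral => t _; rewrite mulrDl.
have bS := bounded_measurable_indic mS.
have mYM : measurable_fun (setT : set GT) (fun t => Y t + M).
  by apply: measurable_funD => //; exact: measurable_cst.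
have := congr1 fine (ge0_integral_mul_cond mYM YM_ge0).
have := congr1 fine (ge0_integral_mul_cond (measurable_cst M) (fun=> M_ge0)).
rewrite -!/(Rintegral _ _ _) !splitM // => ->; exact: addIr.
Qed.

End conditional_indicator.

Section bandit.
Context {R : realType} {d : measure_display} {Omega : measurableType d}.
Variables (P : probability Omega R) (K : nat) (F : nat -> set (set Omega))
  (A : nat -> Omega -> 'I_K) (x : nat -> Omega -> 'I_K -> R).
Hypothesis hd : draws_according P F A x.

Local Notation Fmeasurable t f :=
  (measurable_fun (setT : set (g_sigma_algebraType (F t))) f).

Let F_sigma t : sigma_algebra setT (F t). Proof. by case: hd => -[]. Qed.
Let F_meas t : F t `<=` measurable. Proof. by case: hd => -[_ []]. Qed.

Let F_mono s t : (s <= t)%N -> F s `<=` F t.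
Proof.
case: hd => -[_ [_ FS]] _; elim: t => [|t IHt].
  by rewrite leqn0 => /eqP ->.
by rewrite leq_eqVlt => /predU1P[-> // | /IHt sub B /sub /FS].
Qed.

Let F_pulled t b : F t [set w | A t w = b]. Proof. by case: hd => _ []. Qed.

Let x_ge0 t w b : 0 <= x t w b.
Proof. by case: hd => _ [_ [/(_ t w) [x0 _] _]]. Qed.

Let x_le1 t w b : x t w b <= 1.
Proof.
case: hd => _ [_ [/(_ t w) [x0 x1] _]]; rewrite -x1 (bigD1 b) //= lerDl.
exact: sumr_ge0.
Qed.

Let Fmeasurable_mono s t (f : Omega -> R) :
  (s <= t)%N -> Fmeasurable s f -> Fmeasurable t f.
Proof.
move=> st mf _ B mB; have := mf measurableT B mB.
by rewrite !(measurable_g_measurableTypeE (F_sigma _)) => /(F_mono st).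
Qed.

Let Fmeasurable_measurable t (f : Omega -> R) :
  Fmeasurable t f -> measurable_fun setT f.
Proof. exact: measurable_fun_sub_sigma. Qed.

Variables (a : 'I_K) (C : R).

Definition cum_prob t w := \sum_(1 <= s < t.+1) x s w a.
Definition pulled t : Omega -> R := \1_[set w | A t w = a].
Definition below_cap t w : R := \1_`]-oo, C] (cum_prob t w).
Definition capped_mart t w :=
  \sum_(1 <= s < t.+1) below_cap s w * (pulled s w - x s w a).
Definition capped_qvar t w :=
  \sum_(1 <= s < t.+1) below_cap s w * (x s w a * (1 - x s w a)).

Let cum_probS t w : cum_prob t.+1 w = cum_prob t w + x t.+1 w a.
Proof. by rewrite /cum_prob big_nat_recr. Qed.

Let capped_martS t w : capped_mart t.+1 w =
  capped_mart t w + below_cap t.+1 w * (pulled t.+1 w - x t.+1 w a).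
Proof. by rewrite /capped_mart big_nat_recr. Qed.

Let capped_qvarS t w : capped_qvar t.+1 w =
  capped_qvar t w + below_cap t.+1 w * (x t.+1 w a * (1 - x t.+1 w a)).
Proof. by rewrite /capped_qvar big_nat_recr. Qed.

Let Fmeasurable_x t : Fmeasurable t (fun w => x t.+1 w a).
Proof.
move=> _ B mB; rewrite setTI (measurable_g_measurableTypeE (F_sigma _)).
by case: hd => _ [_ [_ [xF _]]]; exact: (xF t.+1 a B (ltn0Sn t) mB).
Qed.

Let Fmeasurable_pulled t : Fmeasurable t (pulled t).
Proof.
by apply: measurable_indic; rewrite (measurable_g_measurableTypeE (F_sigma _)).
Qed.

Let Fmeasurable_cum_prob u t : (t <= u.+1)%N -> Fmeasurable u (cum_prob t).
Proof.
elim: t => [_|t IHt tu].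
  rewrite (_ : cum_prob 0 = cst 0); first exact: measurable_cst.
  by apply/funext => w; exact: big_geq.
have -> : cum_prob t.+1 = fun w => cum_prob t w + x t.+1 w a.
  by apply/funext => w; exact: cum_probS.
apply: measurable_funD; first by apply: IHt; exact: ltnW.
exact: (@Fmeasurable_mono t).
Qed.

Let Fmeasurable_below_cap u t : (t <= u.+1)%N -> Fmeasurable u (below_cap t).
Proof.
move=> tu; apply: measurableT_comp; last exact: Fmeasurable_cum_prob.
by apply: measurable_indic; exact: measurable_itv.
Qed.

Let Fmeasurable_capped_mart u t : (t <= u)%N -> Fmeasurable u (capped_mart t).
Proof.
elim: t => [_|t IHt tu].
  rewrite (_ : capped_mart 0 = cst 0); first exact: measurable_cst.
  by apply/funext => w; exact: big_geq.
have -> : capped_mart t.+1 = fun w =>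
    capped_mart t w + below_cap t.+1 w * (pulled t.+1 w - x t.+1 w a).
  by apply/funext => w; exact: capped_martS.
apply: measurable_funD; first by apply: IHt; exact: ltnW.
apply: measurable_funM; first by apply: Fmeasurable_below_cap; exact: ltnW.
apply: measurable_funB; first exact: Fmeasurable_mono tu (@Fmeasurable_pulled t.+1).
exact: (@Fmeasurable_mono t _ _ (ltnW tu)).
Qed.

Lemma measurable_cum_prob t : measurable_fun setT (cum_prob t).
Proof. exact: (Fmeasurable_measurable (@Fmeasurable_cum_prob t t _)). Qed.

Lemma measurable_capped_mart t : measurable_fun setT (capped_mart t).
Proof. exact: (Fmeasurable_measurable (@Fmeasurable_capped_mart t t _)). Qed.

Let pulled01 t w : pulled t w = 0 \/ pulled t w = 1.
Proof. by rewrite /pulled indicE; case: (_ \in _); [right | left]. Qed.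

Let below_cap01 t w : below_cap t w = 0 \/ below_cap t w = 1.
Proof. by rewrite /below_cap indicE; case: (_ \in _); [right | left]. Qed.

Let bounded_x t : bounded_measurable (fun w => x t.+1 w a).
Proof.
split; first by apply: (@Fmeasurable_measurable t); exact: Fmeasurable_x.
by exists 1 => w; rewrite ger0_norm ?x_ge0 ?x_le1.
Qed.

Let bounded_pulled t : bounded_measurable (pulled t).
Proof. exact/bounded_measurable_indic/F_meas. Qed.

Let bounded_below_cap t : bounded_measurable (below_cap t).
Proof.
split.
  by apply: (@Fmeasurable_measurable t); exact: Fmeasurable_below_cap.
by exists 1 => w; case: (below_cap01 t w) => ->; rewrite ?normr0 ?normr1.
Qed.

Let bounded_capped_mart t : bounded_measurable (capped_mart t).
Proof.
apply: bounded_measurable_sum => -[|s]; rewrite mem_index_iota // => _ _.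
exact: bounded_measurableM (bounded_below_cap _)
  (bounded_measurableB (bounded_pulled _) (bounded_x _)).
Qed.

Let bounded_capped_qvar t : bounded_measurable (capped_qvar t).
Proof.
apply: bounded_measurable_sum => -[|s]; rewrite mem_index_iota // => _ _.
apply/bounded_measurableM/bounded_measurableM => //.
by apply: bounded_measurableB => //; exact: bounded_measurable_cst.
Qed.

Let pulledE t w : pulled t w = (A t w == a)%:R.
Proof.
rewrite /pulled indicE; congr (nat_of_bool _)%:R.
by apply/idP/eqP => [/set_mem|/mem_set].
Qed.

Let below_capE t w : below_cap t w = if cum_prob t w <= C then 1 else 0.
Proof.
rewrite /below_cap indicE set_itvE.
by case: ifPn => xC; [rewrite mem_set | rewrite memNset //; exact/negP].
Qed.

Let cum_prob_le s t w : (s <= t)%N -> cum_prob s w <= cum_prob t w.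
Proof.
move=> st; rewrite /cum_prob [leRHS](big_cat_nat (n := s.+1)) //= lerDl.
by apply: sumr_ge0 => i _; exact: x_ge0.
Qed.

Lemma measurable_npulls T : measurable_fun setT (npulls A a T : Omega -> R).
Proof.
rewrite (_ : npulls A a T = fun w => \sum_(1 <= s < T.+1) pulled s w).
  suff [] : bounded_measurable (fun w => \sum_(1 <= s < T.+1) pulled s w) by [].
  by apply: bounded_measurable_sum => s _ _; exact: bounded_pulled.
by apply/funext => w; apply: eq_bigr => s _; rewrite pulledE.
Qed.

Let Rintegral_increment t (Y : Omega -> R) : Fmeasurable t Y ->
    (exists M, forall w, `|Y w| <= M) ->
  \int[P]_w (Y w * (pulled t.+1 w - x t.+1 w a)) = 0.
Proof.
move=> mY [M YM].
have bY : bounded_measurable Y.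
  by split; [exact: (@Fmeasurable_measurable t) | exists M].
have x_cond B : F t B -> P (B `&` [set w | A t.+1 w = a]) =
    (\int[P]_(w in B) (x t.+1 w a)%:E)%E.
  by case: hd => _ [_ [_ [_ xc]]]; exact: (xc t.+1 a B (ltn0Sn t)).
under eq_Rintegral do rewrite mulrBr.
have bYp := bounded_measurableM bY (bounded_pulled t.+1).
have bYx := bounded_measurableM bY (bounded_x t).
rewrite RintegralB ?bounded_measurable_integrable //.
rewrite (Rintegral_mul_cond (F_sigma t) (@F_meas t) (F_meas (F_pulled _ _))
  (Fmeasurable_measurable (@Fmeasurable_x t)) _ x_cond mY) ?subrr //.
by exists M.
Qed.

Let bounded_capped_mart_sqr t :
  bounded_measurable (fun w => capped_mart t w ^+ 2).
Proof. by under eq_fun do rewrite expr2; exact: bounded_measurableM. Qed.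

Let Rintegral_capped_mart_sqrB t :
  \int[P]_w (capped_mart t w ^+ 2 - capped_qvar t w) = 0.
Proof.
elim: t => [|t IHt].
  under eq_Rintegral do
    rewrite /capped_mart /capped_qvar !big_geq // expr2 mul0r subr0.
  by rewrite Rintegral_cst // mul0r.
pose Y w := 2 * capped_mart t w * below_cap t.+1 w +
            below_cap t.+1 w * (1 - 2 * x t.+1 w a).
have step w : capped_mart t.+1 w ^+ 2 - capped_qvar t.+1 w =
    (capped_mart t w ^+ 2 - capped_qvar t w) +
    Y w * (pulled t.+1 w - x t.+1 w a).
  rewrite capped_martS capped_qvarS /Y.
  by case: (below_cap01 t.+1 w) => ->; case: (pulled01 t.+1 w) => ->; ring.
have bY : bounded_measurable Y.
  apply: bounded_measurableD; apply: bounded_measurableM => //.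
    by apply: bounded_measurableM => //; exact: bounded_measurable_cst.
  apply: bounded_measurableB; first exact: bounded_measurable_cst.
  by apply: bounded_measurableM => //; exact: bounded_measurable_cst.
have mY : Fmeasurable t Y.
  have mcap : Fmeasurable t (below_cap t.+1) by exact: Fmeasurable_below_cap.
  apply: measurable_funD; apply: measurable_funM => //.
    apply: measurable_funM; first exact: measurable_cst.
    exact: Fmeasurable_capped_mart.
  apply: measurable_funB; first exact: measurable_cst.
  by apply: measurable_funM; [exact: measurable_cst | exact: Fmeasurable_x].
under eq_Rintegral do rewrite step.
rewrite RintegralD ?IHt ?add0r //.
- by apply: Rintegral_increment => //; case: bY.
- exact/bounded_measurable_integrable/bounded_measurableB.
- apply/bounded_measurable_integrable/bounded_measurableM => //.
  exact: bounded_measurableB.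
Qed.

Lemma Rintegral_capped_mart_sqr t :
  \int[P]_w (capped_mart t w ^+ 2) = \int[P]_w (capped_qvar t w).
Proof.
apply/eqP; rewrite -subr_eq0 -RintegralB ?Rintegral_capped_mart_sqrB //.
  exact/bounded_measurable_integrable/bounded_capped_mart_sqr.
exact/bounded_measurable_integrable/bounded_capped_qvar.
Qed.

Lemma capped_qvar_le t w : 0 <= C -> capped_qvar t w <= C.
Proof.
move=> C0.
apply: (@le_trans _ _ (\sum_(1 <= s < t.+1) below_cap s w * x s w a)).
  apply: ler_sum => s _; rewrite below_capE; case: ifP => _; rewrite ?mul0r //.
  by rewrite !mul1r ler_piMr ?x_ge0 // lerBlDr lerDl x_ge0.
elim: t => [|t IHt]; first by rewrite big_geq.
rewrite big_nat_recr //= below_capE; case: ifP => [capped|_]; last first.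
  by rewrite mul0r addr0.
apply: le_trans capped; rewrite cum_probS mul1r lerD2r /cum_prob.
by apply: ler_sum => s _; rewrite below_capE; case: ifP; rewrite ?mul1r ?mul0r.
Qed.

Lemma capped_mart_chebyshev t e : 0 < e -> 0 <= C ->
  (P [set w | e <= `|capped_mart t w|]%R <= (C / e ^+ 2)%:E)%E.
Proof.
move=> e0 C0.
apply: le_trans (bounded_chebyshev P (bounded_capped_mart t) e0) _.
rewrite lee_fin ler_pM2r ?invr_gt0 ?exprn_gt0 // Rintegral_capped_mart_sqr.
apply: le_trans (_ : \int[P]_w C <= C).
  apply: le_Rintegral => //; first exact/bounded_measurable_integrable.
    exact/bounded_measurable_integrable/bounded_measurable_cst.
  by move=> w _; exact: capped_qvar_le.
rewrite Rintegral_cst // (_ : fine _ = 1) ?mulr1 //.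
exact: (congr1 fine (probability_setT P)).
Qed.

Lemma capped_mart_npulls T w :
  cum_prob T w <= C -> capped_mart T w = npulls A a T w - cum_prob T w.
Proof.
move=> capped; rewrite /capped_mart /npulls /cum_prob -sumrB.
apply: eq_big_nat => s /andP[_ sT]; rewrite below_capE pulledE.
by rewrite (le_trans (cum_prob_le _ _) capped) ?mul1r // -ltnS.
Qed.

End bandit.

Section convergence_in_probability.
Context {R : realType} {d : measure_display} {Omega : measurableType d}.
Variable P : probability Omega R.
Implicit Types X Y : nat -> Omega -> R.

Lemma cvg_in_prob_near_eq X Y c :
  (\forall T \near \oo, X T = Y T) -> cvg_in_prob P X c -> cvg_in_prob P Y c.
Proof.
move=> XY Xc e e0; apply: cvg_trans (Xc e e0); apply: near_eq_cvg.
by apply: filterS XY => T ->.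
Qed.

Lemma cvg_in_prob_exists X c e : cvg_in_prob P X c -> 0 < e ->
  \forall T \near \oo, exists w, `|X T w - c| < e.
Proof.
move=> Xc e0; have /fine_cvgP[Pfin Pcvg] := Xc e e0.
near=> T; apply/not_existsP => far.
have : fine (P [set w | e <= `|X T w - c|]) < 1.
  by near: T; exact: (cvgr_lt 0 Pcvg 1 ltr01).
rewrite (_ : [set w | _] = setT); last first.
  by apply/seteqP; split => // w _ /=; rewrite leNgt; apply/negP/far.
by rewrite (_ : fine _ = 1) ?ltxx //; exact: (congr1 fine (probability_setT P)).
Unshelve. all: by end_near.
Qed.

Lemma cvg_in_prob_lower_bound X (c eps : nat -> R) :
    (forall T, 0 < c T) -> (forall T w, (0 < T)%N -> eps T <= X T w) ->
    cvg_in_prob P (fun T w => X T w / c T) 1 ->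
  \forall T \near \oo, eps T <= 2 * c T.
Proof.
move=> c_gt0 eps_le Xc; near=> T.
have [w close] : exists w, `|X T w / c T - 1| < 1.
  by near: T; exact: cvg_in_prob_exists Xc ltr01.
have := eps_le T w; have T_gt0 : (0 < T)%N by near: T; exists 1%N.
move=> /(_ T_gt0); move: close.
by rewrite ltr_norml ltrBlDr ltr_pdivrMr // => /andP[_]; lra.
Unshelve. all: by end_near.
Qed.

End convergence_in_probability.

Section pulls_ratio.
Context {R : realType} {d : measure_display} {Omega : measurableType d}.
Variables (P : probability Omega R) (K : nat) (F : nat -> set (set Omega))
  (A : nat -> Omega -> 'I_K) (x : nat -> Omega -> 'I_K -> R).
Hypothesis hd : draws_according P F A x.
Variable a : 'I_K.

Lemma npulls_dev_subset (N e : R) T : 0 < N -> 0 < e ->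
  [set w | e <= `|npulls A a T w / N - 1|] `<=`
  [set w | e / 2 <= `|cum_prob x a T w / N - 1|] `|`
  [set w | e / 2 * N <= `|capped_mart A x a ((1 + e / 2) * N) T w|].
Proof.
move=> N0 e0 w /= far.
have [|close] := lerP (e / 2) `|cum_prob x a T w / N - 1|; first by left.
right; have capped : cum_prob x a T w <= (1 + e / 2) * N.
  by move: close; rewrite ltr_norml ltrBlDr ltr_pdivrMr // => /andP[_]; lra.
rewrite (capped_mart_npulls hd capped) -ler_pdivlMr //.
have dev_split : npulls A a T w / N - 1 =
    (npulls A a T w - cum_prob x a T w) / N + (cum_prob x a T w / N - 1).
  by field; rewrite gt_eqF.
move: far; rewrite dev_split => /le_trans/(_ (ler_normD _ _)).
rewrite normrM normfV (gtr0_norm N0); lra.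
Qed.

Lemma npulls_cvg_in_prob (N : nat -> R) :
  N @ \oo --> +oo -> cvg_in_prob P (fun T w => cum_prob x a T w / N T) 1 ->
  cvg_in_prob P (fun T w => npulls A a T w / N T) 1.
Proof.
move=> Ny Scvg e e0.
have N_gt0 : \forall T \near \oo, 0 < N T by exact: (cvgryPgt _).1 Ny 0.
pose k := (1 + e / 2) / (e / 2) ^+ 2.
apply: (squeeze_cvge (f := cst 0%E) (h := fun T =>
    P [set w | e / 2 <= `|cum_prob x a T w / N T - 1|]%R + (k / N T)%:E)%E).
- near=> T; have NT : 0 < N T by near: T.
  have e2N : 0 < e / 2 * N T by rewrite !mulr_gt0.
  have mdev (f : Omega -> R) c : measurable_fun setT f ->
      measurable [set w | c <= `|f w / N T - 1|].
    move=> mf; apply: measurable_le_normr; apply: measurable_funB.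
      by apply: measurable_funM => //; exact: measurable_cst.
    exact: measurable_cst.
  have mE0 := mdev _ e (measurable_npulls hd a T).
  have mE1 := mdev _ (e / 2) (measurable_cum_prob hd a T).
  have mE2 := measurable_le_normr (e / 2 * N T)
    (measurable_capped_mart hd a ((1 + e / 2) * N T) T).
  rewrite measure_ge0 /=.
  apply: le_trans (le_measure P (mem_set mE0)
    (mem_set (measurableU _ _ mE1 mE2)) (npulls_dev_subset NT e0)) _.
  apply: le_trans (measureU2 P mE1 mE2) _; apply: leeD => //.
  apply: le_trans (capped_mart_chebyshev hd a T e2N _) _.
    by rewrite mulr_ge0 // ?ltW // addr_gt0 // divr_gt0.
  rewrite lee_fin le_eqVlt; apply/predU1P; left.
  by rewrite /k; field; rewrite !gt_eqF.
- exact: cvg_cst.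
- rewrite -(adde0 0%E); apply: cvgeD => //.
    by apply: Scvg; rewrite divr_gt0.
  apply: cvg_EFin; first exact: nearW.
  by rewrite -(mulr0 k); apply: cvgM (cvg_cst k) _; exact/(gtr0_cvgV0 N_gt0).
Unshelve. all: by end_near.
Qed.

End pulls_ratio.

Theorem lemma2 (R : realType) (d : measure_display) (Omega : measurableType d)
  (P : probability Omega R) (K : nat) (F : nat -> set (set Omega))
  (A : nat -> Omega -> 'I_K) (x : nat -> Omega -> 'I_K -> R) :
  draws_according P F A x ->
  (exists eps : nat -> R,
      (forall T, 0 < eps T) /\
      (fun T => T%:R * eps T) @ \oo --> +oo /\
      (forall T w a, (0 < T)%N -> eps T <= xbar x T w a)) ->
  (exists xstar : nat -> 'I_K -> R,
      (forall T, prob_vec (xstar T)) /\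
      (forall T a, 0 < xstar T a) /\
      (forall a, cvg_in_prob P (fun T w => xbar x T w a / xstar T a) 1)) ->
  stable P A.
Proof.
move=> hd [eps [_ [Teps_cvgy eps_le]]] [xs [_ [xs_gt0 xbar_cvg]]] a.
pose N T := T%:R * xs T a.
have eps_le2 : \forall T \near \oo, eps T <= 2 * xs T a.
  exact: cvg_in_prob_lower_bound (xs_gt0^~ a) (fun T w => eps_le T w a)
    (xbar_cvg a).
have N_cvgy : N @ \oo --> +oo.
  apply/cvgryPge => M; near=> T.
  have : 2 * M <= T%:R * eps T.
    by near: T; exact: (cvgryPge _).1 Teps_cvgy (2 * M).
  have : eps T <= 2 * xs T a by near: T.
  have := ler0n R T; rewrite /N; nra.
exists N; split => //; apply: (npulls_cvg_in_prob hd (a := a) N_cvgy).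
apply: cvg_in_prob_near_eq _ (xbar_cvg a); near=> T; apply/funext => w.
have T_gt0 : (0 < T)%N by near: T; exists 1%N.
rewrite /xbar /cum_prob /N; field.
by rewrite gt_eqF ?xs_gt0 // pnatr_eq0 -lt0n.
Unshelve. all: by end_near.
Qed.
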